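(* Let $K=2$ and consider the loss sequence $\ell_{t,1}=0$, $\ell_{t,2}=1$ for all $1\le t\le T$. For WSU-UX run with any valid $(\eta,\gamma)$ with $\eta<T^{-2/3}$, the regret satisfies $\mathbb{E}[\mathcal R_T]\ge \frac{1}{200}T^{2/3}$.
   Context: WSU-UX. Fix integers $K\ge 2$ (number of arms/experts) and $T\ge 1$ (horizon) and hyperparameters $\eta,\gamma$. The pair $(\eta,\gamma)$ is called valid if $\eta,\gamma\in(0,1/2)$ and $\eta K/\gamma\le 1/2$. Given a fixed (oblivious) loss sequence $\ell_t=(\ell_{t,1},\dots,\ell_{t,K})\in[0,1]^K$, $t=1,\dots,T$, WSU-UX sets $\pi_{1,i}=1/K$ for all $i$ and in each round $t$: forms $\tilde\pi_{t,i}=(1-\gamma)\pi_{t,i}+\gamma/K$; draws $I_t\in[K]$ with $\Pr(I_t=i\mid\mathcal F_{t-1})=\tilde\pi_{t,i}$; sets $\hat\ell_{t,i}=\ell_{t,i}\mathbf 1[I_t=i]/\tilde\pi_{t,i}$; and updates $\pi_{t+1,i}=\pi_{t,i}\bigl(1-\eta(\hat\ell_{t,i}-\sum_{j=1}^K\pi_{t,j}\hat\ell_{t,j})\bigr)$. Here $\mathcal F_t$ is the history (sigma-algebra generated by $I_1,\dots,I_t$). The regret is $\mathbb{E}[\mathcal R_T]=\mathbb{E}\bigl[\sum_{t=1}^T\sum_{j=1}^K\tilde\pi_{t,j}\ell_{t,j}\bigr]-\min_{i\in[K]}\sum_{t=1}^T\ell_{t,i}$. *)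

From HB Require Import structures.
From mathcomp Require Import all_boot all_order all_algebra.
From mathcomp Require Import all_classical all_reals all_analysis.
Set Implicit Arguments. Unset Strict Implicit. Unset Printing Implicit Defensive.
Import Order.TTheory GRing.Theory Num.Theory.
Local Open Scope ring_scope.

(* Rounds are 0-indexed: round t (0 <= t < T) of the paper is round t+1. *)
(* A loss sequence is ell : nat -> 'I_K -> R; ell t i = ell_{t+1,i}. *)

Section WSUUX.
Variables (R : realType) (K : nat) (eta gamma : R).

Definition pi_init : 'I_K -> R := fun _ => 1 / K%:R.

Definition tpi (p : 'I_K -> R) (i : 'I_K) : R := (1 - gamma) * p i + gamma / K%:R.

Definition lhat (l : 'I_K -> R) (p : 'I_K -> R) (It i : 'I_K) : R :=
  if It == i then l i / tpi p i else 0.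

Definition wsu_update (l : 'I_K -> R) (p : 'I_K -> R) (It : 'I_K) : 'I_K -> R :=
  fun i => p i * (1 - eta * (lhat l p It i - \sum_(j < K) p j * lhat l p It j)).

Fixpoint path_prob (ell : nat -> 'I_K -> R) (p : 'I_K -> R) (t : nat)
    (s : seq 'I_K) : R :=
  match s with
  | [::] => 1
  | i :: s' => tpi p i * path_prob ell (wsu_update (ell t) p i) t.+1 s'
  end.

Fixpoint path_loss (ell : nat -> 'I_K -> R) (p : 'I_K -> R) (t : nat)
    (s : seq 'I_K) : R :=
  match s with
  | [::] => 0
  | i :: s' => (\sum_(j < K) tpi p j * ell t j)
               + path_loss ell (wsu_update (ell t) p i) t.+1 s'
  end.

Definition expected_alg_loss (T : nat) (ell : nat -> 'I_K -> R) : R :=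
  \sum_(s : T.-tuple 'I_K) path_prob ell pi_init 0 s * path_loss ell pi_init 0 s.

Definition best_loss (T : nat) (ell : nat -> 'I_K -> R) : R :=
  let vals := [seq \sum_(t < T) ell t i | i : 'I_K] in
  foldr Num.min (head 0 vals) vals.

Definition expected_regret (T : nat) (ell : nat -> 'I_K -> R) : R :=
  expected_alg_loss T ell - best_loss T ell.

Definition valid_params : Prop :=
  0 < eta < 1/2 /\ 0 < gamma < 1/2 /\ eta * K%:R / gamma <= 1/2.

End WSUUX.

(* the loss sequence ell_{t,1} = 0, ell_{t,2} = 1 (arms 1,2 are ord 0,1) *)
Definition lb_losses (R : realType) : nat -> 'I_2 -> R :=
  fun _ i => if i == ord0 then 0 else 1.

From HB Require Import structures.
From mathcomp Require Import all_boot all_order all_algebra.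
From mathcomp Require Import all_classical all_reals all_analysis.
From mathcomp Require Import ring lra.
Import Order.TTheory GRing.Theory Num.Theory.
Local Open Scope ring_scope.

(* Pulling the loss-free arm leaves the weights unchanged, while pulling the
   lossy arm (probability pi~_2) moves its weight p to
   p - eta p (1 - p) / pi~_2.  Averaged over the draw, the weight of the lossy
   arm therefore shrinks by at most the factor 1 - eta per round; as
   pi~_2 >= (1 - gamma) p, induction along the tree of arm paths bounds the
   expected loss below by (1 - gamma) p sum_(k < T) (1 - eta)^k, with initial
   weight p = 1/2.  Bernoulli's inequality bounds the geometric sum below by
   T / (1 + eta T) >= T^(2/3) / 2 when eta < T^(-2/3), while the best arm has
   loss 0. *)

Lemma big_tuple_cons (V : nmodType) (I : finType) n (F : n.+1.-tuple I -> V) :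
  \sum_(s : n.+1.-tuple I) F s = \sum_(i : I) \sum_(s : n.-tuple I) F [tuple of i :: s].
Proof.
rewrite pair_big /= (reindex (fun p : I * n.-tuple I => [tuple of p.1 :: p.2])) //=.
exists (fun t : n.+1.-tuple I => (thead t, [tuple of behead t])).
  by move=> [i s] _ /=; rewrite theadE; congr pair; apply: val_inj.
by move=> t _ /=; rewrite [RHS](tuple_eta t).
Qed.

Lemma big_tuple_nil (V : nmodType) (I : finType) (F : 0.-tuple I -> V) :
  \sum_(s : 0.-tuple I) F s = F [tuple].
Proof.
by rewrite (big_pred1 [tuple]) // => s; rewrite [s]tuple0; apply/esym/eqP/val_inj.
Qed.

Lemma sum_ord2 (V : nmodType) (F : 'I_2 -> V) : \sum_(i < 2) F i = F ord0 + F ord_max.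
Proof. by rewrite big_ord_recr big_ord1; congr (F _ + _); apply: val_inj. Qed.

Lemma sumr_mul_addr (R : comNzRingType) (I : finType) (a c : R) (F G : I -> R) :
  \sum_i a * F i * (c + G i) = a * (c * \sum_i F i + \sum_i F i * G i).
Proof. by rewrite mulr_sumr -big_split mulr_sumr; apply: eq_bigr => i _ /=; ring. Qed.

Lemma ord2_cases (i : 'I_2) : i = ord0 \/ i = ord_max.
Proof. by case: i => [[|[|n]] lt]; [left | right |] => //; apply: val_inj. Qed.

Lemma foldr_min_le_mem (R : realDomainType) (s : seq R) x y :
  y \in s -> foldr Num.min x s <= y.
Proof.
elim: s => [//|z s IH] /=; rewrite inE => /orP[/eqP->|ys].
  by rewrite ge_min lexx.
by rewrite ge_min IH ?orbT.
Qed.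

Lemma wsu_update_sum1 (R : realType) K (eta gamma : R) l (p : 'I_K -> R) It :
  \sum_(i < K) p i = 1 -> \sum_(i < K) wsu_update eta gamma l p It i = 1.
Proof.
move=> p1; rewrite /wsu_update; set c := \sum_(j < K) p j * _.
rewrite (eq_bigr (fun i => p i - eta * (p i * lhat gamma l p It i) + eta * c * p i)); last first.
  by move=> i _; rewrite /c; ring.
by rewrite !big_split /= sumrN -!mulr_sumr p1 -/c; ring.
Qed.

Definition geom_sum {R : pzRingType} (x : R) n := \sum_(k < n) x ^+ k.

Lemma geom_sumS (R : pzRingType) (x : R) n : geom_sum x n.+1 = 1 + x * geom_sum x n.
Proof. by rewrite /geom_sum big_ord_recl expr0 mulr_sumr; under eq_bigr do rewrite exprS. Qed.

Lemma geom_sum_ge0 (R : realDomainType) (x : R) n : 0 <= x -> 0 <= geom_sum x n.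
Proof. by move=> x0; apply: sumr_ge0 => k _; apply: exprn_ge0. Qed.

Lemma one_sub_expn_mul_le1 (R : realDomainType) (x : R) n :
  0 <= x <= 1 -> (1 - x) ^+ n * (1 + x * n%:R) <= 1.
Proof.
move=> /andP[x0 x1]; elim: n => [|n IH]; first by rewrite expr0 mulr0 addr0 mulr1.
rewrite exprSr -mulrA; apply: le_trans IH; apply: ler_wpM2l; first by apply: exprn_ge0; lra.
have n0 : 0 <= n%:R :> R by [].
rewrite -natr1; nra.
Qed.

Lemma natr_le_geom_sum (R : realFieldType) (eta : R) n :
  0 < eta < 1 -> n%:R <= geom_sum (1 - eta) n * (1 + eta * n%:R).
Proof.
move=> /andP[e0 e1].
have etaS : eta * geom_sum (1 - eta) n = 1 - (1 - eta) ^+ n.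
  by apply/eqP; rewrite -subr_eq0 /geom_sum; apply/eqP; have := subrX1 (1 - eta) n; lra.
have B : (1 - eta) ^+ n * (1 + eta * n%:R) <= 1.
  by apply: one_sub_expn_mul_le1; rewrite !ltW.
by rewrite -(ler_pM2l e0) mulrA etaS mulrBl mul1r; lra.
Qed.

Section TwoArmLowerBound.
Context {R : realType} {eta gamma : R}.
Hypothesis valid : valid_params 2 eta gamma.

Local Notation ell := (lb_losses R).
Local Notation tpi := (tpi gamma).
Local Notation update t p i := (wsu_update eta gamma (ell t) p i).

Definition prob2 (p : 'I_2 -> R) := [/\ 0 <= p ord0, 0 <= p ord_max & p ord0 + p ord_max = 1].

Lemma valid_params2E : [/\ 0 < eta, eta < 1/2, 0 < gamma, gamma < 1/2 & 4 * eta <= gamma].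
Proof.
have [/andP[e0 e1] [/andP[g0 g1]]] := valid.
by rewrite ler_pdivrMr // => eg; split => //; lra.
Qed.

Lemma tpi_sum1 p : prob2 p -> tpi p ord0 + tpi p ord_max = 1.
Proof. by case=> _ _ p1; rewrite /tpi addrACA -mulrDr p1; lra. Qed.

Lemma tpi_ge_half p i : prob2 p -> gamma / 2 <= tpi p i.
Proof.
have [_ _ g0 g1 _] := valid_params2E.
case=> p0 p1 _; rewrite /tpi lerDr; apply: mulr_ge0; first lra.
by case: (ord2_cases i) => ->.
Qed.

Lemma update_ord0 t p : update t p ord0 = p.
Proof.
apply: funext => j; rewrite /wsu_update sum_ord2 /lhat eqxx /lb_losses eqxx mul0r.
by case: (ord2_cases j) => ->; rewrite !(mul0r, mulr0, addr0, subr0, mulr1).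
Qed.

Lemma update_ord_max t p :
  update t p ord_max ord_max = p ord_max * (1 - eta * ((1 - p ord_max) / tpi p ord_max)).
Proof. by rewrite /wsu_update sum_ord2 /lhat /lb_losses /=; ring. Qed.

Lemma prob2_update t p i : prob2 p -> prob2 (update t p i).
Proof.
move=> pp; case: (ord2_cases i) => ->; first by rewrite update_ord0.
have [e0 e1 g0 g1 eg] := valid_params2E.
have tp := @tpi_ge_half p ord_max pp; have [p0 p1 psum] := pp.
have sum1 : update t p ord_max ord0 + update t p ord_max ord_max = 1.
  by rewrite -sum_ord2 wsu_update_sum1 // sum_ord2.
have step : eta * ((1 - p ord_max) / tpi p ord_max) <= 1 / 2.
  rewrite mulrA ler_pdivrMr; last lra.
  have : eta * (1 - p ord_max) <= eta by nra.
  lra.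
have q_ge0 : 0 <= update t p ord_max ord_max.
  by rewrite update_ord_max; apply: mulr_ge0 => //; lra.
have q_le : update t p ord_max ord_max <= p ord_max.
  rewrite update_ord_max ler_piMr //.
  have : 0 <= eta * ((1 - p ord_max) / tpi p ord_max) by apply: mulr_ge0; [lra | apply: divr_ge0; lra].
  lra.
by split => //; lra.
Qed.

Lemma path_prob_sum1 n p t :
  prob2 p -> \sum_(s : n.-tuple 'I_2) path_prob eta gamma ell p t s = 1.
Proof.
elim: n p t => [|n IH] p t pp; first by rewrite big_tuple_nil.
rewrite big_tuple_cons sum_ord2 /= -!mulr_sumr !IH ?mulr1 ?tpi_sum1 //;
  exact: prob2_update.
Qed.

Definition expected_loss_from n p t :=
  \sum_(s : n.-tuple 'I_2) path_prob eta gamma ell p t s * path_loss eta gamma ell p t s.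

Lemma expected_loss_fromS n p t : prob2 p ->
  expected_loss_from n.+1 p t = tpi p ord_max + tpi p ord0 * expected_loss_from n p t.+1
                      + tpi p ord_max * expected_loss_from n (update t p ord_max) t.+1.
Proof.
move=> pp; rewrite /expected_loss_from big_tuple_cons sum_ord2 /=.
have round_loss : \sum_(j < 2) tpi p j * ell t j = tpi p ord_max.
  by rewrite sum_ord2 /lb_losses /= mulr0 mulr1 add0r.
rewrite !sumr_mul_addr round_loss !path_prob_sum1 ?update_ord0 //; try exact: prob2_update.
have -> : tpi p ord0 = 1 - tpi p ord_max by rewrite -(tpi_sum1 _ pp) addrK.
by ring.
Qed.

Lemma expected_update_ge t p : prob2 p ->
  (1 - eta) * p ord_max <= tpi p ord0 * p ord_max + tpi p ord_max * update t p ord_max ord_max.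
Proof.
move=> pp; have [e0 _ g0 _ _] := valid_params2E.
have t1_gt0 : 0 < tpi p ord_max by have := @tpi_ge_half p ord_max pp; lra.
have -> : tpi p ord0 = 1 - tpi p ord_max by rewrite -(tpi_sum1 _ pp) addrK.
have [p0 p1 _] := pp.
have -> : tpi p ord_max * update t p ord_max ord_max =
          tpi p ord_max * p ord_max - eta * p ord_max * (1 - p ord_max).
  by rewrite update_ord_max; field; rewrite gt_eqF.
nra.
Qed.

Lemma expected_loss_from_ge n p t : prob2 p ->
  (1 - gamma) * p ord_max * geom_sum (1 - eta) n <= expected_loss_from n p t.
Proof.
have [e0 e1 g0 g1 _] := valid_params2E.
elim: n p t => [|n IH] p t pp.
  by rewrite /expected_loss_from big_tuple_nil /geom_sum big_ord0 /= !mulr0.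
have pq := prob2_update t p ord_max pp.
set q := update t p ord_max in pq *.
have S0 : 0 <= geom_sum (1 - eta) n by apply: geom_sum_ge0; lra.
have t0_ge0 : 0 <= tpi p ord0 by have := @tpi_ge_half p ord0 pp; lra.
have t1_ge0 : 0 <= tpi p ord_max by have := @tpi_ge_half p ord_max pp; lra.
have E0 := ler_wpM2l t0_ge0 (IH p t.+1 pp).
have E1 := ler_wpM2l t1_ge0 (IH q t.+1 pq).
have D : (1 - gamma) * geom_sum (1 - eta) n * ((1 - eta) * p ord_max) <=
         (1 - gamma) * geom_sum (1 - eta) n * (tpi p ord0 * p ord_max + tpi p ord_max * q ord_max).
  by apply: ler_wpM2l; [apply: mulr_ge0; lra | exact: expected_update_ge].
have first_round : (1 - gamma) * p ord_max <= tpi p ord_max.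
  by have [_ p1 _] := pp; rewrite /tpi lerDl; apply: divr_ge0; lra.
rewrite expected_loss_fromS // geom_sumS.
set S := geom_sum _ n in E0 E1 D *.
lra.
Qed.

End TwoArmLowerBound.

Lemma best_loss_lb_le0 (R : realType) T : best_loss T (lb_losses R) <= 0.
Proof.
apply: foldr_min_le_mem; apply/mapP; exists ord0; first by rewrite mem_enum.
by rewrite big1 // => t _; rewrite /lb_losses eqxx.
Qed.

Lemma expected_alg_loss_lb {R : realType} {eta gamma : R} T :
  valid_params 2 eta gamma ->
  geom_sum (1 - eta) T / 4 <= expected_alg_loss eta gamma T (lb_losses R).
Proof.
move=> valid; have [_ e1 _ g1 _] := valid_params2E valid.
have pi0 : prob2 (@pi_init R 2) by rewrite /prob2 /pi_init; split; lra.
have := expected_loss_from_ge valid T _ 0 pi0; rewrite /pi_init; apply: le_trans.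
have : 0 <= geom_sum (1 - eta) T by apply: geom_sum_ge0; lra.
nra.
Qed.

Lemma geom_sum_ge_pow {R : realType} {eta : R} {T : nat} :
  (1 <= T)%N -> 0 < eta < 1 -> eta < T%:R `^ (- (2 / 3)) ->
  T%:R `^ (2 / 3) <= 2 * geom_sum (1 - eta) T.
Proof.
move=> T_ge1 eta01 eta_lt.
have T1 : 1 <= T%:R :> R by rewrite ler1n.
set a := T%:R `^ (2 / 3) in eta_lt *.
have a_gt0 : 0 < a by apply: powR_gt0; lra.
have a_leT : a <= T%:R.
  by rewrite /a -[leRHS](@powRr1 _ T%:R) ?ler0n //; apply: ler_powR => //; lra.
have eta_a : eta * a < 1.
  by move: eta_lt; rewrite powRN -/a -(ltr_pM2r a_gt0) mulVf ?gt_eqF.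
have geom := @natr_le_geom_sum R eta T eta01.
have [eta_gt0 _] := andP eta01.
have etaT : 0 <= eta * T%:R by apply: mulr_ge0; lra.
rewrite -(ler_pM2r (_ : 0 < 1 + eta * T%:R)); last lra.
nra.
Qed.

Theorem mainTheorem2 (R : realType) (T : nat) (eta gamma : R) :
  (1 <= T)%N ->
  valid_params 2 eta gamma ->
  eta < (T%:R) `^ (- (2 / 3)) ->
  1 / 200 * (T%:R) `^ (2 / 3) <= expected_regret eta gamma T (lb_losses R).
Proof.
move=> T_ge1 valid eta_lt; have [eta_gt0 eta_lt1 _ _ _] := valid_params2E valid.
have eta01 : 0 < eta < 1 by apply/andP; split; lra.
have := geom_sum_ge_pow T_ge1 eta01 eta_lt.
have := expected_alg_loss_lb T valid.
have := best_loss_lb_le0 R T.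
have : 0 <= T%:R `^ (2 / 3) :> R by apply: powR_ge0.
rewrite /expected_regret; lra.
Qed.
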